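(* Let $H$ be a $d\times d$ Hermitian matrix with eigendecomposition $H=U\,\mathrm{diag}(\mathbf{q})\,U^\dagger$, where $U$ is unitary and $\mathbf{q}\in\mathbb{R}^d$ lists the eigenvalues. Let $t\ge 1/d$. Then $$\max_{\rho\in S^t}\mathrm{Tr}(\rho H)=\max_{\mathbf{p}\in P(t)}\mathbf{p}\cdot\mathbf{q},$$ and if $\mathbf{p}^*$ is a maximizer of the right-hand side, then $\rho^*=U\,\mathrm{diag}(\mathbf{p}^* )\,U^\dagger$ is a maximizer of the left-hand side.
   Context: $S^t=\{\rho\in\mathcal{L}(\mathbb{C}^d):\rho\succeq 0,\ \mathrm{Tr}(\rho)=1,\ \mathrm{Tr}(\rho^2)\le t\}$ is the set of density operators of purity at most $t$. $P(t)=\{\mathbf{p}\in\mathbb{R}^d:\mathbf{p}\ge 0,\ \sum_i\mathbf{p}_i=1,\ \mathbf{p}\cdot\mathbf{p}\le t\}$. $\mathrm{diag}(\mathbf{a})$ is the diagonal matrix with diagonal $\mathbf{a}$. *)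

From HB Require Import structures.
From mathcomp Require Import all_boot all_order all_algebra.
From mathcomp Require Import sesquilinear spectral.
Set Implicit Arguments. Unset Strict Implicit. Unset Printing Implicit Defensive.
Import Order.TTheory GRing.Theory Num.Theory.
Local Open Scope ring_scope.
Local Open Scope sesquilinear_scope.

(* Complex scalars: any numeric closed field C (e.g. algC, or R[i]). *)
Section Defs.
Variables (C : numClosedFieldType) (d : nat).

Definition hermitian_mx (H : 'M[C]_d) : Prop := H ^t* = H.

Definition psd (rho : 'M[C]_d) : Prop :=
  hermitian_mx rho /\ forall v : 'rV[C]_d, 0 <= (v *m rho *m v ^t*) 0 0.

Definition St (t : C) (rho : 'M[C]_d) : Prop :=
  psd rho /\ \tr rho = 1 /\ \tr (rho *m rho) <= t.

(* dot product of vectors in R^d (stored as real row vectors over C) *)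
Definition dotv (p q : 'rV[C]_d) : C := \sum_(i < d) p 0 i * q 0 i.

Definition Pt (t : C) (p : 'rV[C]_d) : Prop :=
  p \is a realmx /\ (forall i, 0 <= p 0 i) /\ \sum_(i < d) p 0 i = 1
  /\ dotv p p <= t.

Definition Pt_maximizer (t : C) (q p : 'rV[C]_d) : Prop :=
  Pt t p /\ forall p' : 'rV[C]_d, Pt t p' -> dotv p' q <= dotv p q.

Definition St_maximizer (t : C) (H rho : 'M[C]_d) : Prop :=
  St t rho /\ forall r : 'M[C]_d, St t r -> \tr (r *m H) <= \tr (rho *m H).
End Defs.

(* For a density matrix r, the diagonal of U^dagger r U is a probability vector
   whose purity is at most Tr(r^2), since the off-diagonal entries only add
   |r_ij|^2, and whose dot product with q is Tr(r H); conversely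
   U diag(p) U^dagger lies in S^t and pairs with H to p.q.  So both maxima agree
   and maximizers correspond, once p.q is known to attain its maximum on P(t).
   Without compactness over an arbitrary numeric closed field, the maximizer is
   built by water-filling: p_i = max(a q_i - b, 0), the threshold being found
   between two consecutive eigenvalues by solving a quadratic, and optimality
   follows from the KKT conditions and Cauchy-Schwarz.  The degenerate cases are
   t = 1/d, where P(t) is a point, and t >= 1/m, m the multiplicity of the top
   eigenvalue, where the uniform vector on the top eigenspace is optimal. *)

From HB Require Import structures.
From mathcomp Require Import all_boot all_order all_algebra.
From mathcomp Require Import sesquilinear spectral.
From mathcomp Require Import ring lra.
Import Order.TTheory GRing.Theory Num.Theory.
Local Open Scope ring_scope.
Local Open Scope sesquilinear_scope.

Section Waterfilling.
Context {R : realFieldType} {d : nat} (t : R) (q : 'I_d -> R).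

Definition Pt_fun (p : 'I_d -> R) : Prop :=
  (forall i, 0 <= p i) /\ \sum_i p i = 1 /\ \sum_i p i ^+ 2 <= t.

Definition Pt_fun_maximizer (p : 'I_d -> R) : Prop :=
  Pt_fun p /\ forall p', Pt_fun p' -> \sum_i p' i * q i <= \sum_i p i * q i.

Definition pospart (x : R) := Num.max x 0.

Lemma pospart_ge0 x : 0 <= pospart x.
Proof. by rewrite le_max lexx orbT. Qed.

Lemma pospart_ge x : x <= pospart x.
Proof. by rewrite le_max lexx. Qed.

Lemma pospart_id x : 0 <= x -> pospart x = x.
Proof. exact: max_l. Qed.

Lemma pospart_eq0 x : x <= 0 -> pospart x = 0.
Proof. exact: max_r. Qed.

Lemma pospart_eq0P x : (pospart x == 0) = (x <= 0).
Proof. by rewrite eq_le pospart_ge0 andbT ge_max lexx andbT. Qed.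

Lemma pospart_sqr x : pospart x ^+ 2 = x * pospart x.
Proof.
by case: (lerP 0 x) => [/pospart_id | /ltW/pospart_eq0] ->; rewrite ?expr2 ?mulr0.
Qed.

Lemma pospartZ a x : 0 <= a -> pospart (a * x) = a * pospart x.
Proof. by move=> a_ge0; rewrite /pospart maxr_pMr // mulr0. Qed.

(* Sufficiency of the KKT conditions: [p' . p <= t] for every feasible [p'] by
   Cauchy-Schwarz, and [a q_i - b <= p_i] with equality on the support of [p]. *)
Lemma waterfill_maximizer (a b : R) : 0 < a ->
  \sum_i pospart (a * q i - b) = 1 -> \sum_i pospart (a * q i - b) ^+ 2 = t ->
  Pt_fun_maximizer (fun i => pospart (a * q i - b)).
Proof.
move=> a_gt0 p_sum p_sqsum.
split; first by split; [move=> i; exact: pospart_ge0 | rewrite p_sqsum].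
move=> p' [p'_ge0 [p'_sum p'_sqsum]].
set p := fun i => pospart (a * q i - b) in p_sum p_sqsum *.
have p'_lin : a * \sum_i p' i * q i - b <= \sum_i p' i * p i.
  rewrite mulr_sumr -[b]mulr1 -p'_sum mulr_sumr -sumrB; apply: ler_sum => i _.
  by have := pospart_ge (a * q i - b); have := p'_ge0 i; rewrite /p; nra.
have p_lin : a * \sum_i p i * q i - b = t.
  rewrite mulr_sumr -[b]mulr1 -p_sum mulr_sumr -sumrB -p_sqsum.
  by apply: eq_bigr => i _; rewrite /p pospart_sqr; ring.
have p'p_le : 2 * \sum_i p' i * p i <= \sum_i p' i ^+ 2 + \sum_i p i ^+ 2.
  rewrite mulr_sumr -big_split /=; apply: ler_sum => i _.
  by have := sqr_ge0 (p' i - p i); nra.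
have : a * (\sum_i p' i * q i - \sum_i p i * q i) <= 0 by nra.
by rewrite pmulr_rle0 // subr_le0.
Qed.

Definition top_card r : R := #|[pred i | r <= q i]|%:R.
Definition top_sum r := \sum_(i | r <= q i) q i.
Definition top_sqsum r := \sum_(i | r <= q i) q i ^+ 2.

Lemma top_card_gt0 {r i} : r <= q i -> 0 < top_card r.
Proof. by move=> ri; rewrite ltr0n; apply/card_gt0P; exists i. Qed.

Lemma sum_top_const r (c : R) : \sum_(i | r <= q i) c = top_card r * c.
Proof. by rewrite sumr_const mulr_natl. Qed.

Lemma sum_top r (c : R) : \sum_i (if r <= q i then c else 0) = top_card r * c.
Proof. by rewrite -big_mkcond sum_top_const. Qed.

Lemma top_uniform_maximizer (iM : 'I_d) : (forall j, q j <= q iM) ->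
  (top_card (q iM))^-1 <= t ->
  Pt_fun_maximizer (fun i => if q iM <= q i then (top_card (q iM))^-1 else 0).
Proof.
set M := q iM; set k := top_card M => qM k_le.
have k_gt0 : 0 < k := top_card_gt0 (lexx (q iM)).
have top_eq i : (M <= q i) = (q i == M) by rewrite eq_le qM.
split.
  split; first by move=> i /=; case: ifP => _ //; rewrite invr_ge0 ltW.
  rewrite sum_top mulfV ?gt_eqF //; split=> //.
  rewrite (eq_bigr (fun i => if M <= q i then k^-1 ^+ 2 else 0)) => [|i _].
    by rewrite sum_top expr2 mulrA mulfV ?gt_eqF ?mul1r.
  by case: ifP; rewrite ?expr0n.
move=> p' [p'_ge0 [p'_sum _]].
rewrite [X in _ <= X](eq_bigr (fun i => if M <= q i then k^-1 * M else 0)) => [|i _]; last first.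
  by case: ifP => [Mq|_]; rewrite ?mul0r // (eqP (_ : q i == M)) -?top_eq.
rewrite sum_top mulrA mulfV ?gt_eqF // mul1r -[M]mul1r -p'_sum mulr_suml.
by apply: ler_sum => i _; rewrite ler_wpM2l.
Qed.

(* At minimal purity [t = 1/d] the uniform vector is the only feasible point:
   [\sum_i (p_i - 1/d)^2 = \sum_i p_i^2 - 1/d]. *)
Lemma uniform_maximizer : (0 < d)%N -> t = d%:R^-1 ->
  Pt_fun_maximizer (fun _ => d%:R^-1).
Proof.
move=> d_gt0 t_min.
have d_neq0 : d%:R != 0 :> R by rewrite pnatr_eq0 -lt0n.
have sum_const (c : R) : \sum_(i < d) c = d%:R * c by rewrite sumr_const card_ord mulr_natl.
have uniform_feasible : Pt_fun (fun _ => d%:R^-1).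
  split; first by move=> i; rewrite invr_ge0 ler0n.
  by rewrite !sum_const mulfV // expr2 mulrA mulfV // mul1r t_min.
split=> // p' [p'_ge0 [p'_sum p'_sqsum]].
have dev : \sum_i (p' i - d%:R^-1) ^+ 2 = \sum_i p' i ^+ 2 - d%:R^-1.
  rewrite (eq_bigr (fun i => p' i ^+ 2 - 2 * d%:R^-1 * p' i + d%:R^-1 ^+ 2)) => [|i _]; last by ring.
  rewrite big_split sumrB /= -mulr_sumr p'_sum sum_const expr2 mulrA mulfV //; ring.
have /eqP : \sum_i (p' i - d%:R^-1) ^+ 2 = 0.
  apply/eqP; rewrite eq_le sumr_ge0 ?andbT => [|i _]; last exact: sqr_ge0.
  by rewrite dev subr_le0 -t_min.
rewrite psumr_eq0 => [/allP p'_eq|i _]; last exact: sqr_ge0.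
rewrite (eq_bigr (fun i => d%:R^-1 * q i)) // => i _.
by have /(_ (mem_index_enum i)) := p'_eq i; rewrite sqrf_eq0 subr_eq0 => /eqP ->.
Qed.

(* With threshold [s] the water-filling vector is [pospart (q - s) / mass s], of
   purity [sqmass s / mass s ^+ 2]; a root of [excess] has purity exactly [t]. *)
Definition mass s := \sum_i pospart (q i - s).
Definition sqmass s := \sum_i pospart (q i - s) ^+ 2.
Definition excess s := sqmass s - t * mass s ^+ 2.

Lemma mass_ge0 s : 0 <= mass s.
Proof. by apply: sumr_ge0 => i _; exact: pospart_ge0. Qed.

Lemma mass_eq0 s : (mass s == 0) = [forall i, q i <= s].
Proof.
rewrite psumr_eq0 => [|i _]; last exact: pospart_ge0.
by apply/allP/forallP => [q_le i|q_le i _]; [have := q_le i (mem_index_enum i) | have := q_le i];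
  rewrite pospart_eq0P subr_le0.
Qed.

Lemma next_breakpoint {s} : 0 < mass s ->
  exists2 j, s < q j & forall i, q i <= s \/ q j <= q i.
Proof.
move=> mass_gt0.
have /forallPn [i0] : ~~ [forall i, q i <= s] by rewrite -mass_eq0 gt_eqF.
rewrite -ltNge => si0.
have [j sj j_min] := @arg_minP _ _ _ i0 (fun i => s < q i) q si0.
exists j => // i; case: (lerP (q i) s) => [|/j_min]; by [left | right].
Qed.

Section Piece.
Context {s r : R}.
Hypotheses (s_le_r : s <= r) (no_breakpoint : forall i, q i <= s \/ r <= q i).

Lemma pospart_piece i : pospart (q i - s) = if r <= q i then q i - s else 0.
Proof.
case: ifP => [r_le | r_gt]; first by rewrite pospart_id // subr_ge0 (le_trans s_le_r).
by case: (no_breakpoint i) => [q_le|]; [rewrite pospart_eq0 // subr_le0 | rewrite r_gt].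
Qed.

Lemma mass_piece : mass s = top_sum r - top_card r * s.
Proof.
rewrite /mass (eq_bigr _ (fun i _ => pospart_piece i)) -big_mkcond /=.
by rewrite sumrB sum_top_const.
Qed.

Lemma sqmass_piece : sqmass s = top_sqsum r - 2 * s * top_sum r + top_card r * s ^+ 2.
Proof.
rewrite /sqmass (eq_bigr (fun i => if r <= q i then (q i - s) ^+ 2 else 0)) => [|i _].
  rewrite -big_mkcond /= (eq_bigr (fun i => q i ^+ 2 - 2 * s * q i + s ^+ 2)) => [|i _].
    by rewrite big_split sumrB /= -mulr_sumr sum_top_const.
  by ring.
by rewrite pospart_piece; case: ifP; rewrite ?expr0n.
Qed.

Lemma excess_piece : top_card r * excess s =
  (top_card r * top_sqsum r - top_sum r ^+ 2) - (t * top_card r - 1) * mass s ^+ 2.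
Proof. by rewrite /excess sqmass_piece mass_piece; ring. Qed.

End Piece.

Hypothesis sqrt_exists : forall x : R, 0 <= x -> exists2 y, 0 <= y & y * y = x.

(* Between two consecutive breakpoints [k * excess] is [W - c * mass^2] with
   [mass] affine in the threshold, so a sign change is located by a square root. *)
Lemma excess_root_in_piece {L r} : L < r -> (forall i, q i <= L \/ r <= q i) ->
  excess L <= 0 -> 0 < mass L -> 0 < excess r ->
  exists2 s, excess s = 0 & 0 < mass s.
Proof.
move=> L_lt_r no_bp_L eL_le0 mL_gt0 er_gt0.
have no_bp_r i : q i <= r \/ r <= q i by case/orP: (le_total (q i) r); [left | right].
have k_gt0 : 0 < top_card r.
  have [j Lj _] := next_breakpoint mL_gt0.
  by case: (no_bp_L j) => [|/top_card_gt0 //]; rewrite leNgt Lj.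
have mL := mass_piece (ltW L_lt_r) no_bp_L; have eL := excess_piece (ltW L_lt_r) no_bp_L.
have mR := mass_piece (lexx r) no_bp_r; have eR := excess_piece (lexx r) no_bp_r.
set k := top_card r in k_gt0 mL eL mR eR *; set S := top_sum r in mL eL mR eR *.
set W := _ - S ^+ 2 in eL eR; set c := t * k - 1 in eL eR.
have mR_ge0 := mass_ge0 r.
have mR_lt : mass r < mass L by rewrite mL mR; nra.
have WL : W - c * mass L ^+ 2 <= 0 by rewrite -eL; nra.
have WR : 0 < W - c * mass r ^+ 2 by rewrite -eR; nra.
have c_gt0 : 0 < c.
  have sq_lt : 0 < mass L ^+ 2 - mass r ^+ 2 by rewrite subr_gt0; nra.
  by rewrite -(pmulr_lgt0 _ sq_lt); lra.
have [z z_ge0 zz] : exists2 z, 0 <= z & z * z = W / c.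
  by apply: sqrt_exists; rewrite divr_ge0 ?ltW //; nra.
have czz : c * (z * z) = W by rewrite zz mulrC divfK ?gt_eqF.
have z_gt : mass r < z.
  have : mass r ^+ 2 < z ^+ 2 by rewrite -(ltr_pM2l c_gt0) expr2 czz; lra.
  by nra.
have z_le : z <= mass L.
  have : z ^+ 2 <= mass L ^+ 2 by rewrite -(ler_pM2l c_gt0) expr2 czz; lra.
  by nra.
pose s := (S - z) / k.
have ks : k * s = S - z by rewrite /s mulrC divfK ?gt_eqF.
have L_le_s : L <= s by rewrite -(ler_pM2l k_gt0) ks; lra.
have s_lt_r : s < r by rewrite -(ltr_pM2l k_gt0) ks; lra.
have no_bp_s i : q i <= s \/ r <= q i.
  by case: (no_bp_L i) => [/le_trans/(_ L_le_s)|]; [left | right].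
have ms : mass s = z by rewrite (mass_piece (ltW s_lt_r) no_bp_s) -/k -/S ks; ring.
exists s; last by rewrite ms; lra.
have := excess_piece (ltW s_lt_r) no_bp_s; rewrite -/k -/S -/W -/c ms expr2 czz subrr.
by move/eqP; rewrite mulf_eq0 gt_eqF //= => /eqP.
Qed.

Lemma excess_gt0_below_top {s r} : (forall i, q i <= r) -> s <= r ->
  (forall i, q i <= s \/ r <= q i) -> t * top_card r < 1 -> 0 < mass s ->
  0 < excess s.
Proof.
move=> q_le s_le_r no_bp tk_lt ms_gt0.
have top_eq i : r <= q i -> q i = r by move=> r_le; apply/eqP; rewrite eq_le q_le.
have k_gt0 : 0 < top_card r.
  have [j sj _] := next_breakpoint ms_gt0.
  by case: (no_bp j) => [|/top_card_gt0 //]; rewrite leNgt sj.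
have S_eq : top_sum r = top_card r * r.
  by rewrite /top_sum (eq_bigr (fun=> r)) ?sum_top_const // => i /top_eq.
have Q_eq : top_sqsum r = top_card r * r ^+ 2.
  by rewrite /top_sqsum (eq_bigr (fun=> r ^+ 2)) ?sum_top_const // => i /top_eq ->.
have := excess_piece s_le_r no_bp; rewrite S_eq Q_eq.
have : 0 < mass s ^+ 2 by rewrite exprn_gt0.
by move=> m2 ke; rewrite -(pmulr_rgt0 _ k_gt0) ke; nra.
Qed.

(* Induction on the number of values above [L]: move [L] up to the next value
   while the excess stays nonpositive there; this cannot go on up to the top
   value, just below which the excess is positive. *)
Lemma excess_root_sweep {iM : 'I_d} {L} : (forall j, q j <= q iM) ->
  t * top_card (q iM) < 1 -> excess L <= 0 -> 0 < mass L ->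
  exists2 s, excess s = 0 & 0 < mass s.
Proof.
move=> qM tk_lt; have [n] := ubnP #|[pred i | L < q i]|; elim: n L => // n IHn L.
rewrite ltnS => above_L eL mL.
have [j Lj no_bp] := next_breakpoint mL.
have [ej | ej] := ltrP 0 (excess (q j)); first exact: excess_root_in_piece Lj no_bp eL mL ej.
have [mj | mj] := ltrP 0 (mass (q j)).
  apply: (IHn (q j)) => //; apply: leq_trans above_L; apply: proper_card.
  rewrite properE; apply/andP; split.
    by apply/subsetP => i; rewrite !inE; apply: lt_trans.
  by apply/subsetPn; exists j; rewrite !inE ?Lj ?ltxx.
have /forallP q_le : [forall i, q i <= q j] by rewrite -mass_eq0 eq_le mj mass_ge0.
have jM : q j = q iM by apply/eqP; rewrite eq_le qM q_le.
have := excess_gt0_below_top q_le (ltW Lj) no_bp; rewrite jM => /(_ tk_lt mL).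
by rewrite ltNge eL.
Qed.

(* Below every value all indices are active and [d * excess = W - c * mass^2]
   with [c > 0]; it suffices to push [mass] beyond [|W| / c + 1]. *)
Lemma excess_le0_far_left : (0 < d)%N -> d%:R^-1 < t ->
  exists2 s, excess s <= 0 & 0 < mass s.
Proof.
move=> d_gt0 t_gt.
have [j0 _ j0_min] := @arg_minP _ _ _ (Ordinal d_gt0) predT q isT.
set r := q j0 in j0_min *.
have no_bp s i : q i <= s \/ r <= q i by right; apply: j0_min.
have d_pos : 0 < d%:R :> R by rewrite ltr0n.
have k_d : top_card r = d%:R.
  rewrite /top_card -[in RHS](card_ord d); congr _%:R.
  by apply: eq_card => i; rewrite inE j0_min.
set W := top_card r * top_sqsum r - top_sum r ^+ 2; set c := t * d%:R - 1.
have c_gt0 : 0 < c by rewrite subr_gt0 -ltr_pdivrMr // div1r.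
pose y := `|W| / c + 1.
have y_ge1 : 1 <= y by rewrite /y; have := divr_ge0 (normr_ge0 W) (ltW c_gt0); lra.
have cy : c * y = `|W| + c by rewrite /y mulrDr mulr1 mulrC divfK ?gt_eqF.
pose s := r - y / d%:R.
have s_le_r : s <= r by rewrite /s gerBl divr_ge0 // (le_trans ler01 y_ge1).
have ms : mass s = mass r + y.
  rewrite (mass_piece s_le_r (no_bp s)) (mass_piece (lexx r) (no_bp r)) k_d /s.
  by rewrite mulrBr [_ * (y / _)]mulrC divfK ?gt_eqF //; ring.
have mr_ge0 := mass_ge0 r.
exists s; last by rewrite ms; lra.
rewrite -(pmulr_rle0 _ (_ : 0 < top_card r)); last by rewrite k_d.
rewrite (excess_piece s_le_r (no_bp s)) -/W k_d -/c.
have y_le : y <= mass s ^+ 2 by rewrite ms; nra.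
have := ler_wpM2l (ltW c_gt0) y_le; have := ler_norm W; lra.
Qed.

Theorem Pt_fun_maximizer_exists : (0 < d)%N -> d%:R^-1 <= t ->
  exists p, Pt_fun_maximizer p.
Proof.
move=> d_gt0 t_ge.
have [iM _ qM] := @arg_maxP _ _ _ (Ordinal d_gt0) predT q isT.
have {}qM j : q j <= q iM := qM j isT.
have [t_min | t_neq] := eqVneq t d%:R^-1.
  by exists (fun _ => d%:R^-1); exact: uniform_maximizer.
have t_gt : d%:R^-1 < t by rewrite lt_neqAle eq_sym t_neq t_ge.
have [k_le | t_lt] := lerP (top_card (q iM))^-1 t.
  by eexists; exact: top_uniform_maximizer qM k_le.
have tk_lt : t * top_card (q iM) < 1.
  by rewrite -ltr_pdivlMr ?div1r // (top_card_gt0 (lexx (q iM))).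
have [L eL mL] := excess_le0_far_left d_gt0 t_gt.
have [s es ms] := excess_root_sweep qM tk_lt eL mL.
pose a := (mass s)^-1.
have a_gt0 : 0 < a by rewrite invr_gt0.
have p_eq i : pospart (a * q i - s * a) = a * pospart (q i - s).
  by rewrite -pospartZ ?ltW // mulrBr [s * a]mulrC.
exists (fun i => pospart (a * q i - s * a)); apply: waterfill_maximizer => //.
  by rewrite (eq_bigr _ (fun i _ => p_eq i)) -mulr_sumr mulVf ?gt_eqF.
rewrite (eq_bigr (fun i => a ^+ 2 * pospart (q i - s) ^+ 2)) => [|i _]; last by rewrite p_eq exprMn.
rewrite -mulr_sumr -/(sqmass s); move/eqP: es; rewrite subr_eq0 => /eqP ->.
by rewrite /a mulrCA -exprMn mulVf ?gt_eqF // expr1n mulr1.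
Qed.

End Waterfilling.

Section RealSubfield.
Variable C : numClosedFieldType.

(* The real elements of [C], packaged as a [realFieldType] so that the
   water-filling construction above applies to them. *)
Definition realsub := {x : C | x \is Num.real}.

HB.instance Definition _ := [isSub for (@sval C (fun x => x \is Num.real)) : realsub -> C].
HB.instance Definition _ := [Choice of realsub by <:].
HB.instance Definition _ := [SubChoice_isSubZmodule of realsub by <:].
HB.instance Definition _ := [SubZmodule_isSubNzRing of realsub by <:].
HB.instance Definition _ := [SubNzRing_isSubComNzRing of realsub by <:].
HB.instance Definition _ := [SubNzRing_isSubUnitRing of realsub by <:].
HB.instance Definition _ := [SubComUnitRing_isSubIntegralDomain of realsub by <:].
HB.instance Definition _ := [SubIntegralDomain_isSubField of realsub by <:].

Definition realsub_le (x y : realsub) := val x <= val y.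
Definition realsub_lt (x y : realsub) := val x < val y.
Definition realsub_norm (x : realsub) : realsub := Sub `|val x| (normr_real (val x)).

Fact realsub_le0_add x y : realsub_le 0 x -> realsub_le 0 y -> realsub_le 0 (x + y).
Proof. exact: addr_ge0. Qed.

Fact realsub_le0_mul x y : realsub_le 0 x -> realsub_le 0 y -> realsub_le 0 (x * y).
Proof. exact: mulr_ge0. Qed.

Fact realsub_le0_anti x : realsub_le 0 x -> realsub_le x 0 -> x = 0.
Proof. by rewrite /realsub_le /= => x_ge0 x_le0; apply/val_inj/eqP; rewrite eq_le x_ge0 x_le0. Qed.

Fact realsub_subr_ge0 x y : realsub_le 0 (y - x) = realsub_le x y.
Proof. exact: subr_ge0. Qed.

Fact realsub_le0_total x : realsub_le 0 x || realsub_le x 0.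
Proof. by rewrite /realsub_le -realE; exact: valP. Qed.

Fact realsub_normN x : realsub_norm (- x) = realsub_norm x.
Proof. by apply: val_inj; rewrite /= normrN. Qed.

Fact realsub_ge0_norm x : realsub_le 0 x -> realsub_norm x = x.
Proof. by move=> x_ge0; apply: val_inj; rewrite /= ger0_norm. Qed.

Fact realsub_lt_def x y : realsub_lt x y = (y != x) && realsub_le x y.
Proof. exact: lt_def. Qed.

HB.instance Definition _ := Num.IntegralDomain_isLeReal.Build realsub
  realsub_le0_add realsub_le0_mul realsub_le0_anti realsub_subr_ge0
  realsub_le0_total realsub_normN realsub_ge0_norm realsub_lt_def.

Lemma realsub_sqrt (x : realsub) : 0 <= x -> exists2 y, 0 <= y & y * y = x.
Proof.
move=> x_ge0; have sqrt_ge0 : 0 <= sqrtC (val x) by rewrite sqrtC_ge0.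
exists (Sub (sqrtC (val x)) (ger0_real sqrt_ge0)) => //.
by apply: val_inj; rewrite rmorphM /= -expr2 sqrtCK.
Qed.

End RealSubfield.

Section RealRows.
Context {C : numClosedFieldType} {d : nat}.

Definition val_row (f : 'I_d -> realsub C) : 'rV[C]_d := \row_i val (f i).
Definition insub_fun (p : 'rV[C]_d) : 'I_d -> realsub C := fun i => insubd 0 (p 0 i).

Lemma val_rowK {p} : p \is a realmx -> val_row (insub_fun p) = p.
Proof. by move=> /mxOverP p_real; apply/rowP => i; rewrite mxE val_insubd p_real. Qed.

Lemma dotv_val_row f g : dotv (val_row f) (val_row g) = val (\sum_i f i * g i).
Proof. by rewrite rmorph_sum; apply: eq_bigr => i _; rewrite !mxE rmorphM. Qed.

Lemma Pt_val_row (t : realsub C) f : Pt (val t) (val_row f) <-> Pt_fun t f.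
Proof.
have sum_val : \sum_i val_row f 0 i = val (\sum_i f i).
  by rewrite rmorph_sum; apply: eq_bigr => i _; rewrite mxE.
have sqsum_val : dotv (val_row f) (val_row f) = val (\sum_i f i ^+ 2).
  by rewrite dotv_val_row; congr val; apply: eq_bigr => i _; rewrite expr2.
rewrite /Pt /Pt_fun sum_val sqsum_val; split.
  move=> [_ [f_ge0 [f_sum f_sqsum]]]; split; first by move=> i; have := f_ge0 i; rewrite mxE.
  by split=> //; apply: val_inj; rewrite f_sum rmorph1.
move=> [f_ge0 [f_sum f_sqsum]]; split.
  by apply/mxOverP => i j; rewrite mxE; exact: valP.
split; first by move=> i; rewrite mxE; exact: f_ge0.
by rewrite f_sum rmorph1.
Qed.

Lemma Pt_maximizer_exists (t : C) (q : 'rV[C]_d) : (0 < d)%N -> q \is a realmx ->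
  d%:R^-1 <= t -> exists p, Pt_maximizer t q p.
Proof.
move=> d_gt0 q_real t_ge.
have t_real : t \is Num.real by apply: ger0_real; apply: le_trans t_ge; rewrite invr_ge0 ler0n.
pose tR : realsub C := Sub t t_real.
have tR_ge : d%:R^-1 <= tR by rewrite -[_ <= _]/(val d%:R^-1 <= t) fmorphV rmorph_nat.
have [pR [Pp p_max]] := Pt_fun_maximizer_exists tR (insub_fun q) (@realsub_sqrt C) d_gt0 tR_ge.
exists (val_row pR); split; first exact/(Pt_val_row tR).
move=> p' Pp'; have p'_real : p' \is a realmx by case: Pp'.
rewrite -(val_rowK p'_real) -(val_rowK q_real) !dotv_val_row.
by apply: p_max; apply/(Pt_val_row tR); rewrite val_rowK.
Qed.

End RealRows.

Section DensityMatrices.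
Context {C : numClosedFieldType} {d : nat}.
Implicit Types (A V : 'M[C]_d) (p q : 'rV[C]_d) (t : C).

Lemma trmxC_mul m n k (A : 'M[C]_(m, n)) (B : 'M[C]_(n, k)) : (A *m B)^t* = B^t* *m A^t*.
Proof. by rewrite trmx_mul map_mxM. Qed.

Lemma trmxC_unitary_mul {V} : V \is unitarymx -> V^t* *m V = 1%:M.
Proof. by rewrite -trmxC_unitary => /unitarymxP; rewrite trmxCK. Qed.

Lemma unitary_conj_mulmx {V} A B : V \is unitarymx ->
  (V *m A *m V^t*) *m (V *m B *m V^t*) = V *m (A *m B) *m V^t*.
Proof. by move=> V_unitary; rewrite !mulmxA mulmxKtV. Qed.

Lemma mxtrace_unitary_conj {V} A : V \is unitarymx -> \tr (V *m A *m V^t*) = \tr A.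
Proof. by move=> V_unitary; rewrite mxtrace_mulC mulmxA trmxC_unitary_mul ?mul1mx. Qed.

Lemma mxtrace_mul_diag_mx A q : \tr (A *m diag_mx q) = dotv (\row_i A i i) q.
Proof. by rewrite mul_mx_diag; apply: eq_bigr => i _; rewrite !mxE. Qed.

Lemma diag_of_diag_mx p : \row_i diag_mx p i i = p.
Proof. by apply/rowP => i; rewrite !mxE eqxx mulr1n. Qed.

Lemma hermitian_mxE {A} : hermitian_mx A -> forall i j, A j i = (A i j)^*.
Proof. by move=> A_herm i j; rewrite -{1}A_herm !mxE. Qed.

Lemma psd_diag_ge0 {A} : psd A -> forall i, 0 <= A i i.
Proof.
by case=> _ A_pos i; have := A_pos 'e_i; rewrite trmx_delta map_delta_mx -rowE -colE !mxE.
Qed.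

Lemma psd_conj V {A} : psd A -> psd (V *m A *m V^t*).
Proof.
case=> A_herm A_pos; split; first by rewrite /hermitian_mx !trmxC_mul trmxCK A_herm mulmxA.
by move=> v; have := A_pos (v *m V); rewrite trmxC_mul !mulmxA.
Qed.

Lemma psd_diag_mx {p} : (forall i, 0 <= p 0 i) -> psd (diag_mx p).
Proof.
move=> p_ge0; split.
  rewrite /hermitian_mx tr_diag_mx map_diag_mx realmxC //.
  by apply/mxOverP => i j; rewrite ord1 ger0_real.
move=> v; rewrite mul_mx_diag mxE; apply: sumr_ge0 => j _.
by rewrite !mxE mulrAC mulr_ge0 ?mul_conjC_ge0.
Qed.

(* Dropping the off-diagonal terms [A_ij A_ji = |A_ij|^2] of [tr (A A)]. *)
Lemma sum_sqr_diag_le {A} : hermitian_mx A -> \sum_i A i i * A i i <= \tr (A *m A).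
Proof.
move=> A_herm; rewrite /mxtrace; apply: ler_sum => i _.
rewrite mxE (bigD1 i) //= lerDl; apply: sumr_ge0 => j _.
by rewrite (hermitian_mxE A_herm i j) mul_conjC_ge0.
Qed.

Lemma St_diag_mx {t p} : Pt t p -> St t (diag_mx p).
Proof.
move=> [_ [p_ge0 [p_sum p_sqsum]]]; split; first exact: psd_diag_mx.
by rewrite mxtrace_diag mxtrace_mul_diag_mx diag_of_diag_mx.
Qed.

Lemma Pt_diag_of_St {t A} : St t A -> Pt t (\row_i A i i).
Proof.
move=> [A_psd [A_tr A_sq]]; have A_ge0 := psd_diag_ge0 A_psd.
split; first by apply/mxOverP => i j; rewrite ord1 mxE ger0_real.
split; first by move=> i; rewrite mxE.
split; first by rewrite -A_tr; apply: eq_bigr => i _; rewrite mxE.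
rewrite [dotv _ _](_ : _ = \sum_i A i i * A i i); last by apply: eq_bigr => i _; rewrite mxE.
exact: le_trans (sum_sqr_diag_le A_psd.1) A_sq.
Qed.

Lemma St_unitary_conj {t V A} : V \is unitarymx -> St t A -> St t (V *m A *m V^t*).
Proof.
move=> V_unitary [A_psd [A_tr A_sq]]; split; first exact: psd_conj.
by rewrite unitary_conj_mulmx // !mxtrace_unitary_conj.
Qed.

Lemma mxtrace_mul_conj_diag A U q :
  \tr (A *m (U *m diag_mx q *m U^t*)) = dotv (\row_i (U^t* *m A *m U) i i) q.
Proof. by rewrite !mulmxA mxtrace_mulC !mulmxA mxtrace_mul_diag_mx. Qed.

End DensityMatrices.

Theorem mainTheorem3 (C : numClosedFieldType) (d : nat)
    (H U : 'M[C]_d) (q : 'rV[C]_d) (t : C) :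
  (0 < d)%N ->
  hermitian_mx H ->
  U \is unitarymx ->
  q \is a realmx ->
  H = U *m diag_mx q *m U ^t* ->
  d%:R^-1 <= t ->
  (exists p : 'rV[C]_d, Pt_maximizer t q p) /\
  (forall p : 'rV[C]_d, Pt_maximizer t q p ->
     St_maximizer t H (U *m diag_mx p *m U ^t*) /\
     \tr ((U *m diag_mx p *m U ^t*) *m H) = dotv p q).
Proof.
move=> d_gt0 _ U_unitary q_real -> t_ge.
split; first exact: Pt_maximizer_exists.
move=> p [Pp p_max].
have rho_diag : U^t* *m (U *m diag_mx p *m U^t*) *m U = diag_mx p.
  by rewrite !mulmxA trmxC_unitary_mul // mul1mx mulmxKtV.
have tr_rho : \tr ((U *m diag_mx p *m U^t*) *m (U *m diag_mx q *m U^t*)) = dotv p q.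
  by rewrite mxtrace_mul_conj_diag rho_diag diag_of_diag_mx.
split=> //; split=> [|r r_St]; first exact: St_unitary_conj U_unitary (St_diag_mx Pp).
rewrite tr_rho mxtrace_mul_conj_diag; apply/p_max/Pt_diag_of_St.
by rewrite -[X in _ *m X]trmxCK; apply: St_unitary_conj; rewrite ?trmxC_unitary.
Qed.
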